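(* Let $t\geq 2$ be an integer. There are a positive constant $c$ and $n_0\in\mathbb{N}$ such that for every $n>n_0$: $$\mathrm{IR}(2K_2, K_{1,n}) \leq n + c\, n \log^{-1/4} n,\qquad \mathrm{IR}(P_4, K_{1,n}) \leq n + c\, n\log^{-1/4} n,\qquad \mathrm{IR}(K_{t,t}, K_{1,n}) \leq n + c\, n^{1-\frac{1}{2t}}.$$
   Context: All graphs are finite and simple. $K_{1,n}$ is the star with $n$ edges, $2K_2$ is the disjoint union of two edges, $P_4$ is the path on $4$ vertices, $K_{t,t}$ is the complete bipartite graph with parts of size $t$. For graphs $F$, $H$, $G$, write $F \overset{\text{ind}}{\longrightarrow} (H,G)$ if for every coloring of the edges of $F$ with red and blue there is either a red induced copy of $H$ (a vertex set $S\subseteq V(F)$ with $F[S]\cong H$ and all edges of $F[S]$ red) or a blue induced copy of $G$ (defined analogously with blue). The induced Ramsey number $\mathrm{IR}(H,G)$ is the smallest number of vertices of a graph $F$ with $F \overset{\text{ind}}{\longrightarrow} (H,G)$. *)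

From mathcomp Require Import all_boot.
From Stdlib Require Import Reals.

Set Implicit Arguments.
Unset Strict Implicit.
Unset Printing Implicit Defensive.

Definition simple_graph (V : finType) (e : rel V) : Prop :=
  (forall x y, e x y = e y x) /\ (forall x, e x x = false).

(* An edge colouring of the graph (V,e) with red (true) / blue (false):
   a symmetric function on pairs of vertices (only its values on edges matter). *)
Definition colouring (V : finType) (col : V -> V -> bool) : Prop :=
  forall x y, col x y = col y x.

Definition mono_induced_copy (V : finType) (e : rel V) (col : V -> V -> bool)
  (b : bool) (W : finType) (h : rel W) : Prop :=
  exists f : W -> V,
    injective f /\
    (forall u v, e (f u) (f v) = h u v) /\
    (forall u v, h u v -> col (f u) (f v) = b).

Definition ind_arrow (V : finType) (e : rel V)
  (W1 : finType) (h : rel W1) (W2 : finType) (g : rel W2) : Prop :=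
  forall col : V -> V -> bool, colouring col ->
    mono_induced_copy e col true h \/ mono_induced_copy e col false g.

(* IR(H,G) <= x : since IR(H,G) is the least number of vertices of a graph F
   with F -ind-> (H,G), the inequality IR(H,G) <= x holds iff some finite simple
   graph F on m <= x vertices (wlog vertex set 'I_m) satisfies F -ind-> (H,G). *)
Definition IR_le (W1 : finType) (h : rel W1) (W2 : finType) (g : rel W2)
  (x : R) : Prop :=
  exists (m : nat) (e : rel 'I_m),
    simple_graph e /\ (INR m <= x)%R /\ ind_arrow e h g.

Definition twoK2 : rel 'I_4 := fun i j =>
  [|| (nat_of_ord i == 0) && (nat_of_ord j == 1), (nat_of_ord i == 1) && (nat_of_ord j == 0),
      (nat_of_ord i == 2) && (nat_of_ord j == 3) | (nat_of_ord i == 3) && (nat_of_ord j == 2)].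

Definition P4 : rel 'I_4 := fun i j =>
  (nat_of_ord i == (nat_of_ord j).+1) || (nat_of_ord j == (nat_of_ord i).+1).

Definition Ktt (t : nat) : rel ('I_t + 'I_t)%type := fun x y =>
  match x, y with
  | inl _, inr _ | inr _, inl _ => true
  | _, _ => false
  end.

Definition star (n : nat) : rel (option 'I_n) := fun x y =>
  match x, y with
  | None, Some _ | Some _, None => true
  | _, _ => false
  end.

(* For 2K_2 and P_4 the host graph is bipartite: one side is [m] with
   m = w^3 + 1, the other consists of k copies of every w^2-subset of [m], and a
   is joined to the copies of the subsets avoiding a.  If a colouring has no
   blue K_{1,n}, every a keeps so many red neighbours that the union of their
   subsets (the shadow of a) has more than m/2 elements.  Hence some i, j lie in
   each other's shadow, which gives a red induced 2K_2.  For P_4, either the red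
   neighbourhoods of a and of some x in its shadow meet, giving a red induced
   P_4, or red neighbourhoods are disjoint along shadows and a greedy choice
   packs w + 1 of them into the second side, which is too small.
   For K_{t,t} the host is K_{m,N} with m = t (2g)^t and N = n + n/g + t: every
   vertex of the first side has more than N - n red edges, so averaging over
   t-subsets yields a t-set of red neighbours shared by t vertices.
   Taking w ~ (log n)^(1/4) and g ~ n^(1/(2t)) gives the stated orders. *)

From mathcomp Require Import all_boot.
From Stdlib Require Import Reals Lra.
(* Re-imported so that its [^] on nat shadows the one of [Reals]. *)
From mathcomp Require Import ssrnat zify.

Set Implicit Arguments.
Unset Strict Implicit.
Unset Printing Implicit Defensive.

Lemma IR_le_of_arrow (V : finType) (e : rel V) (W1 : finType) (h : rel W1)
    (W2 : finType) (g : rel W2) (x : R) :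
  simple_graph e -> ind_arrow e h g -> (INR #|V| <= x)%R -> IR_le h g x.
Proof.
move=> [esym eirr] arrow le_x.
exists #|V|, (fun i j => e (enum_val i) (enum_val j)).
split; first by split=> [i j|i]; [exact: esym | exact: eirr].
split=> // col col_sym.
have [] := arrow (fun x y => col (enum_rank x) (enum_rank y)) (fun x y => col_sym _ _);
  move=> [f [f_inj [f_ind f_col]]]; [left | right];
  exists (fun u => enum_rank (f u)); split=> [u v /enum_rank_inj /f_inj //|];
  by split=> u v; rewrite ?enum_rankK // => /f_col.
Qed.

Lemma IR_le_trans (W1 : finType) (h : rel W1) (W2 : finType) (g : rel W2)
    (x y : R) :
  IR_le h g x -> (x <= y)%R -> IR_le h g y.
Proof.
move=> [m [e [e_simple [le_m arrow]]]] le_xy.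
by exists m, e; split; [|split; [lra|]].
Qed.

(** * Bipartite hosts and their colourings *)

Lemma ord4_ind (P : 'I_4 -> Prop) :
  P (@Ordinal 4 0 isT) -> P (@Ordinal 4 1 isT) -> P (@Ordinal 4 2 isT) ->
  P (@Ordinal 4 3 isT) -> forall k, P k.
Proof.
by move=> P0 P1 P2 P3 [[|[|[|[|k]]]] lt_k] //; rewrite (bool_irrelevance lt_k isT).
Qed.

Definition quad (T : Type) (x0 x1 x2 x3 : T) (k : 'I_4) : T :=
  match nat_of_ord k with 0 => x0 | 1 => x1 | 2 => x2 | _ => x3 end.

Section Bigraph.

Variables (A L : finType) (adj : A -> L -> bool).

Definition bigraph : rel (A + L) := fun x y =>
  match x, y with
  | inl a, inr b | inr b, inl a => adj a b
  | _, _ => false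
  end.

Lemma bigraph_simple : simple_graph bigraph.
Proof. by split=> [[a|b] [a'|b']|[a|b]]. Qed.

Variables (col : A + L -> A + L -> bool) (col_sym : colouring col).

Definition nbhd a := [set b | adj a b].
Definition red_nbhd a := [set b | adj a b && col (inl a) (inr b)].
Definition blue_nbhd a := [set b | adj a b && ~~ col (inl a) (inr b)].

Lemma blue_star_copy n a :
  n <= #|blue_nbhd a| -> mono_induced_copy bigraph col false (@star n).
Proof.
move=> le_n.
pose leaf (i : 'I_n) := enum_val (widen_ord le_n i).
have leaf_blue i : adj a (leaf i) && ~~ col (inl a) (inr (leaf i)).
  by have := enum_valP (widen_ord le_n i); rewrite inE.
exists (fun u => if u is Some i then inr (leaf i) else inl a); split; [|split].
- move=> [i|] [j|] //= [] // /enum_val_inj /(congr1 val) /= eq_ij.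
  by congr Some; apply: val_inj.
- by move=> [i|] [j|] //=; [case/andP: (leaf_blue i) | case/andP: (leaf_blue j)].
- move=> [i|] [j|] //= _; last by case/andP: (leaf_blue j) => _ /negbTE.
  by rewrite col_sym; case/andP: (leaf_blue i) => _ /negbTE.
Qed.

Lemma blue_star_or_red_nbhd n :
  mono_induced_copy bigraph col false (@star n) \/
  forall a, #|nbhd a| < #|red_nbhd a| + n.
Proof.
case: (boolP [exists a, n <= #|blue_nbhd a|]) => [/existsP [a le_n]|].
  by left; exact: blue_star_copy le_n.
rewrite negb_exists => /forallP small; right=> a.
have -> : nbhd a = red_nbhd a :|: blue_nbhd a.
  by apply/setP=> b; rewrite !inE; case: (adj a b); case: (col _ _).
by apply: leq_ltn_trans (leq_card_setU _ _) _; rewrite ltn_add2l ltnNge small.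
Qed.

Lemma red_twoK2_copy i j b b' :
  i != j -> adj i b -> adj j b' -> ~~ adj i b' -> ~~ adj j b ->
  col (inl i) (inr b) -> col (inl j) (inr b') ->
  mono_induced_copy bigraph col true twoK2.
Proof.
move=> ij ib jb' ib' jb red_ib red_jb'.
have bb' : b != b' by apply: contraNneq ib' => <-.
have b'b : b' != b by rewrite eq_sym.
have ji : j != i by rewrite eq_sym.
exists (quad (inl i) (inr b) (inl j) (inr b')); split; [|split].
- move=> u v; elim/ord4_ind: u; elim/ord4_ind: v => //= uv;
   first [ by apply: val_inj | by case: uv |
     by case: uv => /eqP; rewrite ?(negbTE ij) ?(negbTE ji) ?(negbTE bb') ?(negbTE b'b)].
- move=> u v; elim/ord4_ind: u; elim/ord4_ind: v => //=;
  by rewrite ?ib ?jb' ?(negbTE ib') ?(negbTE jb).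
- move=> u v; elim/ord4_ind: u; elim/ord4_ind: v => //= _;
  by rewrite ?red_ib ?red_jb' // col_sym.
Qed.

Lemma red_P4_copy i x q p :
  i != x -> adj i q -> adj i p -> adj x p -> ~~ adj x q ->
  col (inl i) (inr q) -> col (inl i) (inr p) -> col (inl x) (inr p) ->
  mono_induced_copy bigraph col true P4.
Proof.
move=> ix iq ip xp xq red_iq red_ip red_xp.
have pq : p != q by apply: contraNneq xq => <-.
have qp : q != p by rewrite eq_sym.
have xi : x != i by rewrite eq_sym.
exists (quad (inr q) (inl i) (inr p) (inl x)); split; [|split].
- move=> u v; elim/ord4_ind: u; elim/ord4_ind: v => //= uv;
   first [ by apply: val_inj | by case: uv |
     by case: uv => /eqP; rewrite ?(negbTE ix) ?(negbTE xi) ?(negbTE pq) ?(negbTE qp)].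
- move=> u v; elim/ord4_ind: u; elim/ord4_ind: v => //=;
  by rewrite ?iq ?ip ?xp ?(negbTE xq).
- move=> u v; elim/ord4_ind: u; elim/ord4_ind: v => //= _;
  by rewrite ?red_iq ?red_ip ?red_xp // col_sym.
Qed.

Lemma red_Ktt_copy t (Q : {set A}) (Y : {set L}) :
  t <= #|Q| -> t <= #|Y| ->
  (forall a b, a \in Q -> b \in Y -> adj a b && col (inl a) (inr b)) ->
  mono_induced_copy bigraph col true (@Ktt t).
Proof.
move=> le_tQ le_tY QY_red.
pose fQ (k : 'I_t) := enum_val (widen_ord le_tQ k).
pose fY (k : 'I_t) := enum_val (widen_ord le_tY k).
have red k l : adj (fQ k) (fY l) && col (inl (fQ k)) (inr (fY l)).
  by apply: QY_red; apply: enum_valP.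
exists (fun u => match u with inl k => inl (fQ k) | inr k => inr (fY k) end).
split; [|split].
- by move=> [k|k] [l|l] //= [] /enum_val_inj /(congr1 val) /= /val_inj ->.
- by move=> [k|k] [l|l] //=; [case/andP: (red k l) | case/andP: (red l k)].
- move=> [k|k] [l|l] //= _; first by case/andP: (red k l).
  by rewrite col_sym; case/andP: (red l k).
Qed.

End Bigraph.

(** * Double counting *)

Section Counting.

Variables (A L : finType).

Lemma sum_card_asym (H : A -> {set A}) :
  (forall i j, j \in H i -> i \notin H j) ->
  2 * \sum_i #|H i| + #|A| <= #|A| * #|A|.
Proof.
move=> asym.
have not_both i j : ~~ ((j \in H i) && (i \in H j)).
  by apply/andP=> [[ji ij]]; move: (asym i j ji); rewrite ij.
have pairs_le : \sum_i \sum_j ((j \in H i) + (i \in H j) + (i == j) : nat)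
    <= \sum_(i : A) \sum_(j : A) 1.
  apply: leq_sum => i _; apply: leq_sum => j _.
  case: eqP => [->|_]; first by have := not_both j j; case: (j \in H j).
  by have := not_both i j; case: (j \in H i); case: (i \in H j).
have card_H i : \sum_j (j \in H i : nat) = #|H i|.
  by rewrite -sum1_card [RHS]big_mkcond; apply: eq_bigr => j _; case: (j \in H i).
have diag (i : A) : \sum_j (i == j : nat) = 1.
  by rewrite (bigD1 i) //= eqxx big1 // => j; rewrite eq_sym => /negbTE ->.
move: pairs_le.
rewrite (eq_bigr (fun i => #|H i| + \sum_j (i \in H j : nat) + 1)) => [|i _]; last first.
  by rewrite !big_split /= card_H diag.
rewrite !big_split /= exchange_big /= (eq_bigr _ (fun j _ => card_H j)).
under [X in _ <= X]eq_bigr => i _ do rewrite sum1_card.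
have cardA : #|(fun _ : A => true)| = #|A| by apply: eq_card.
by rewrite sum1_card sum_nat_const cardA; lia.
Qed.

Lemma exists_mutual_pair (H : A -> {set A}) d :
  (forall a, d <= #|H a|) -> 0 < #|A| -> #|A| <= 2 * d ->
  exists i j, j \in H i /\ i \in H j.
Proof.
move=> le_d A_gt0 A_le.
case: (boolP [exists i, exists j, (j \in H i) && (i \in H j)]).
  by case/existsP=> i /existsP [j /andP [ji ij]]; exists i, j.
rewrite negb_exists => /forallP no_pair; exfalso.
have asym i j : j \in H i -> i \notin H j.
  by have := no_pair i; rewrite negb_exists => /forallP /(_ j); case: (j \in H i).
have := sum_card_asym asym.
have : #|A| * d <= \sum_i #|H i| by rewrite -sum_nat_const; apply: leq_sum.
nia.
Qed.

Lemma greedy_disjoint_card (H : A -> {set A}) (R : A -> {set L}) d K l :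
  (forall a, d <= #|H a|) -> (forall a x, x \in H a -> R a :&: R x = set0) ->
  (forall a, K <= #|R a|) -> l * (#|A| - d) < #|A| -> l.+1 * K <= #|L|.
Proof.
move=> le_d disj le_K lt_l.
have step j : j <= l.+1 -> exists (C : {set A}) (U : {set L}),
    [/\ #|~: C| <= j * (#|A| - d), j * K <= #|U| &
        forall x, x \in C -> R x :&: U = set0].
  elim: j => [|j IH] le_j.
    by exists setT, set0; rewrite setCT cards0; split=> // x _; rewrite setI0.
  have [C [U [C_big U_big CU]]] := IH (ltnW le_j).
  have /card_gt0P [x Cx] : 0 < #|C|.
    have : j * (#|A| - d) <= l * (#|A| - d) by rewrite leq_mul2r -ltnS le_j orbT.
    have := cardsC C; nia.
  exists (C :&: H x), (U :|: R x); split.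
  - rewrite setCI; apply: leq_trans (leq_card_setU _ _) _.
    by rewrite mulSnr leq_add //; have := cardsC (H x); have := le_d x; lia.
  - by rewrite cardsU setIC (CU x Cx) cards0 subn0 mulSnr leq_add.
  - move=> y; rewrite inE => /andP [Cy Hy].
    by rewrite setIUr (CU y Cy) set0U setIC disj.
have [C [U [_ U_big _]]] := step l.+1 (leqnn _).
exact: leq_trans U_big (max_card _).
Qed.

Lemma sum_bin_card (R : A -> {set L}) t :
  \sum_a 'C(#|R a|, t) = \sum_(Y : {set L} | #|Y| == t) #|[set a | Y \subset R a]|.
Proof.
transitivity (\sum_a \sum_(Y : {set L} | #|Y| == t) (Y \subset R a : nat)).
  apply: eq_bigr => a _; rewrite -cards_draws -sum1_card !big_mkcond /=.
  rewrite [RHS]big_mkcond; apply: eq_bigr => Y _.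
  by rewrite inE; case: (_ \subset _); case: (_ == _).
rewrite exchange_big; apply: eq_bigr => Y _.
by rewrite -sum1_card [RHS]big_mkcond; apply: eq_bigr => a _; rewrite inE; case: (_ \subset _).
Qed.

Lemma exists_common_subset (R : A -> {set L}) t K :
  (forall a, K <= #|R a|) -> t.-1 * 'C(#|L|, t) < #|A| * 'C(K, t) ->
  exists Y : {set L}, #|Y| = t /\ t.-1 < #|[set a | Y \subset R a]|.
Proof.
move=> le_K lt_count.
case: (boolP [exists Y : {set L}, (#|Y| == t) && (t.-1 < #|[set a | Y \subset R a]|)]).
  by case/existsP=> Y /andP [/eqP ? ?]; exists Y.
rewrite negb_exists => /forallP few; exfalso; move: lt_count; apply/negP; rewrite -leqNgt.
have lower : #|A| * 'C(K, t) <= \sum_a 'C(#|R a|, t).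
  by rewrite -sum_nat_const; apply: leq_sum => a _; apply: leq_bin2l.
apply: leq_trans lower _; rewrite sum_bin_card -card_draws -sum1_card big_distrr /=.
rewrite [X in _ <= X](eq_bigl (fun Y : {set L} => #|Y| == t)) => [|Y]; last by rewrite inE.
apply: leq_sum => Y /eqP card_Y; rewrite muln1 leqNgt.
by have := few Y; rewrite card_Y eqxx.
Qed.

End Counting.

(** * The host graphs *)

Section SubsetDesign.

Variables m r k : nat.

Definition rsubset := {X : {set 'I_m} | #|X| == r}.
Definition design := (rsubset * 'I_k)%type.
Definition avoids (a : 'I_m) (p : design) : bool := a \notin val p.1.

Lemma card_rsubset_sub (H : {set 'I_m}) :
  #|[set X : rsubset | val X \subset H]| = 'C(#|H|, r).
Proof.
rewrite -cards_draws -(card_imset _ val_inj); apply: eq_card => B.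
rewrite !inE; apply/imsetP/andP => [[X]|[sub_BH card_B]].
  by rewrite inE => sub_XH ->; split=> //; exact: (valP X).
by exists (exist _ B card_B); rewrite ?inE.
Qed.

Lemma card_design_sub (H : {set 'I_m}) :
  #|[set p : design | val p.1 \subset H]| = 'C(#|H|, r) * k.
Proof.
have -> : [set p : design | val p.1 \subset H] =
    setX [set X : rsubset | val X \subset H] setT.
  by apply/setP=> -[X j]; rewrite !inE andbT.
by rewrite cardsX card_rsubset_sub cardsT card_ord.
Qed.

Lemma card_design : #|{: design}| = 'C(m, r) * k.
Proof.
rewrite -cardsT -[m in 'C(m, r)]card_ord -cardsT -card_design_sub.
by apply: eq_card => p; rewrite !inE subsetT.
Qed.

Lemma card_nbhd_avoids a : #|nbhd avoids a| = 'C(m.-1, r) * k.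
Proof.
have -> : nbhd avoids a = [set p : design | val p.1 \subset [set~ a]].
  apply/setP=> p; rewrite !inE /avoids; apply/idP/subsetP.
    by move=> a_p x x_p; rewrite !inE; apply: contraNneq a_p => <-.
  by move=> sub; apply/negP => /sub; rewrite !inE eqxx.
by rewrite card_design_sub cardsC1 card_ord.
Qed.

Variable col : 'I_m + design -> 'I_m + design -> bool.

Definition shadow a : {set 'I_m} :=
  [set x | [exists p in red_nbhd avoids col a, x \in val p.1]].

Lemma shadow_irr a : a \notin shadow a.
Proof.
rewrite inE; apply/existsP => -[p /andP [red_p a_p]].
by move: red_p; rewrite inE /avoids a_p.
Qed.

Lemma shadow_large a D :
  'C(D, r) * k < #|red_nbhd avoids col a| -> D < #|shadow a|.
Proof.
move=> lt_red; rewrite ltnNge; apply/negP => le_D.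
have : #|red_nbhd avoids col a| <= 'C(#|shadow a|, r) * k.
  rewrite -card_design_sub; apply: subset_leq_card; apply/subsetP => p red_p.
  by rewrite inE; apply/subsetP => x x_p; rewrite inE; apply/existsP; exists p; rewrite red_p.
move/(leq_trans lt_red); rewrite ltn_mul2r => /andP [_].
by rewrite ltnNge leq_bin2l.
Qed.

Lemma shadow_witness a x :
  x \in shadow a -> exists2 q, q \in red_nbhd avoids col a & ~~ avoids x q.
Proof. by rewrite inE => /existsP [p /andP [red_p x_p]]; exists p; rewrite /avoids ?x_p. Qed.

End SubsetDesign.

Lemma design_arrow_twoK2 m r k n D :
  0 < m -> m <= 2 * D.+1 -> 'C(D, r) * k + n <= 'C(m.-1, r) * k ->
  ind_arrow (bigraph (@avoids m r k)) twoK2 (@star n).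
Proof.
move=> m_gt0 m_le count col col_sym.
have [blue|red_big] := blue_star_or_red_nbhd (@avoids m r k) col_sym n; [by right | left].
have shadow_big a : D.+1 <= #|shadow col a|.
  by apply: shadow_large; have := red_big a; rewrite card_nbhd_avoids; lia.
have := exists_mutual_pair shadow_big; rewrite card_ord.
case/(_ m_gt0 m_le) => i [j [ji ij]].
have [q red_iq jq] := shadow_witness ji.
have [q' red_jq' iq'] := shadow_witness ij.
move: red_iq red_jq'; rewrite !inE => /andP [iq red_iq] /andP [jq' red_jq'].
apply: (red_twoK2_copy col_sym _ iq jq' iq' jq red_iq red_jq').
by apply: contraTneq ji => ->; rewrite (negbTE (shadow_irr _ _)).
Qed.

Lemma design_arrow_P4 m r k n D w :
  w * (m - D.+1) < m -> 'C(D, r) * k + n <= 'C(m.-1, r) * k ->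
  'C(m, r) * k < w.+1 * ('C(m.-1, r) * k - n.-1) ->
  ind_arrow (bigraph (@avoids m r k)) P4 (@star n).
Proof.
move=> lt_m count count_P4 col col_sym.
have [blue|red_big] := blue_star_or_red_nbhd (@avoids m r k) col_sym n; [by right | left].
have red_ge a : 'C(m.-1, r) * k - n.-1 <= #|red_nbhd (@avoids m r k) col a|.
  by have := red_big a; rewrite card_nbhd_avoids; lia.
have shadow_big a : D.+1 <= #|shadow col a|.
  by apply: shadow_large; have := red_big a; rewrite card_nbhd_avoids; lia.
case: (boolP [exists a, exists x, (x \in shadow col a) &&
          (red_nbhd (@avoids m r k) col a :&: red_nbhd (@avoids m r k) col x != set0)]).
  case/existsP=> a /existsP [x /andP [x_a /set0Pn [p]]].
  rewrite !inE => /andP [/andP [ap red_ap] /andP [xp red_xp]].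
  have [q red_aq xq] := shadow_witness x_a.
  move: red_aq; rewrite inE => /andP [aq red_aq].
  apply: (red_P4_copy col_sym _ aq ap xp xq red_aq red_ap red_xp).
  by apply: contraTneq x_a => <-; rewrite (negbTE (shadow_irr _ _)).
rewrite negb_exists => /forallP no_P4; exfalso.
have disjoint a x : x \in shadow col a ->
    red_nbhd (@avoids m r k) col a :&: red_nbhd (@avoids m r k) col x = set0.
  move=> x_a; have := no_P4 a; rewrite negb_exists => /forallP /(_ x).
  by rewrite x_a negbK => /eqP.
have := greedy_disjoint_card shadow_big disjoint red_ge.
by rewrite card_ord card_design => /(_ w lt_m); rewrite leqNgt count_P4.
Qed.

Definition complete_adj (A L : Type) (a : A) (b : L) := true.

Lemma complete_arrow_Ktt m N t n :
  0 < t -> t.-1 * 'C(N, t) < m * 'C(N - n.-1, t) ->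
  ind_arrow (bigraph (@complete_adj 'I_m 'I_N)) (@Ktt t) (@star n).
Proof.
move=> t_gt0 count col col_sym.
have [blue|red_big] := blue_star_or_red_nbhd (@complete_adj 'I_m 'I_N) col_sym n;
  [by right | left].
have red_ge a : N - n.-1 <= #|red_nbhd (@complete_adj 'I_m 'I_N) col a|.
  have := red_big a; have -> : #|nbhd (@complete_adj 'I_m 'I_N) a| = N.
    by rewrite -[RHS]card_ord -cardsT; apply: eq_card => b; rewrite !inE.
  lia.
have := exists_common_subset red_ge; rewrite !card_ord.
case/(_ t count) => Y [card_Y many].
apply: (red_Ktt_copy col_sym
  (Q := [set a | Y \subset red_nbhd (@complete_adj 'I_m 'I_N) col a]) (Y := Y)).
- by move: many; case: t t_gt0 {count card_Y}.
- by rewrite card_Y.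
- by move=> a b; rewrite inE => /subsetP sub /sub; rewrite inE.
Qed.

(** * Choice of parameters *)

Lemma bin_exp_ratio_mono a b r : a <= b -> 'C(a, r) * b ^ r <= 'C(b, r) * a ^ r.
Proof.
move=> le_ab.
rewrite -(@leq_pmul2r r`!) ?fact_gt0 // mulnAC bin_ffact [X in _ <= X]mulnAC bin_ffact.
elim: r => [|r IH]; first by rewrite !muln1.
rewrite !ffactnSr !expnSr.
have step : (a - r) * b <= (b - r) * a.
  rewrite !mulnBl; rewrite [a * b]mulnC; apply: leq_sub2l; exact: leq_mul.
have := leq_mul IH step.
set u := a - r; set v := b - r; set X := a ^_ r; set Y := b ^_ r.
set Z := a ^ r; set W := b ^ r.
clearbody u v X Y Z W; move=> prod; nia.
Qed.

Lemma bernoulli_expn a k : a ^ k * (a + k) <= (a + 1) ^ k * a.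
Proof.
elim: k => [|k IH]; first by rewrite expn0 addn0 !mul1n.
rewrite !expnS.
have step : a * (a + k.+1) <= (a + 1) * (a + k) by nia.
have lhs := leq_mul (leqnn (a ^ k)) step.
have rhs := leq_mul IH (leqnn (a + 1)).
move: lhs rhs; set X := a ^ k; set Y := (a + 1) ^ k; clearbody X Y => lhs rhs; nia.
Qed.

Lemma double_expn_leq a : 2 * a ^ a.+1 <= (a + 1) ^ a.+1.
Proof.
case: a => [|a]; first by [].
have := bernoulli_expn a.+1 a.+2.
set X := a.+1 ^ a.+2; set Y := (a.+1 + 1) ^ a.+2; clearbody X Y => bern; nia.
Qed.

Lemma ffact_leq_expn n k : n ^_ k <= n ^ k.
Proof.
elim: k => [|k IH]; first by [].
rewrite ffactnSr expnSr; apply: leq_mul => //; exact: leq_subr.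
Qed.

Lemma leq_expn_base m n e : m <= n -> m ^ e <= n ^ e.
Proof. by case: e => [|e] // le_mn; rewrite leq_exp2r. Qed.

Lemma expn_leq_ffact n k : (n.+1 - k) ^ k <= n ^_ k.
Proof.
elim: k => [|k IH]; first by [].
rewrite ffactnSr expnSr subSS; apply: leq_mul => //.
apply: leq_trans IH; apply: leq_expn_base; lia.
Qed.

Lemma bin_leq_exp2 m r : 'C(m, r) <= 2 ^ m.
Proof.
have := cards_draws [set: 'I_m] r; rewrite cardsT card_ord => <-.
rewrite -[m in 2 ^ m](card_ord m) -cardsT -card_powerset.
by apply: subset_leq_card; apply/subsetP => A; rewrite !inE => /andP [].
Qed.

(* C(w^3 - w^2, w^2) / C(w^3, w^2) <= (1 - 1/w)^(w^2) <= 2^(-w). *)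
Lemma mul_bin_sub_leq w : 1 <= w -> 'C(w ^ 3 - w ^ 2, w ^ 2) * w <= 'C(w ^ 3, w ^ 2).
Proof.
move=> w_gt0.
have ratio := @bin_exp_ratio_mono (w ^ 3 - w ^ 2) (w ^ 3) (w ^ 2) (leq_subr _ _).
have subE : w ^ 3 - w ^ 2 = (w - 1) * w ^ 2.
  by rewrite mulnBl mul1n -expnS.
have cubeE : w ^ 3 = w * w ^ 2 by rewrite -expnS.
move: ratio; set X := 'C(_, _); set Y := 'C(_, _).
rewrite subE cubeE !expnMn !mulnA leq_pmul2r; last by rewrite !expn_gt0 w_gt0.
rewrite leq_pmul2r ?expn_gt0 ?w_gt0 // => ratio.
have halving : 2 ^ w * (w - 1) ^ (w ^ 2) <= w ^ (w ^ 2).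
  have := double_expn_leq (w - 1).
  have -> : (w - 1).+1 = w by rewrite subn1 prednK.
  rewrite subnK // => bern; have := leq_expn_base w bern.
  by rewrite expnMn -!expnM mulnn.
have shrink : X * 2 ^ w <= Y.
  rewrite -(@leq_pmul2r (w ^ w ^ 2)) ?expn_gt0 ?w_gt0 //.
  have Y_mul := leq_mul (leqnn Y) halving.
  have X_mul := leq_mul ratio (leqnn (2 ^ w)).
  move: ratio Y_mul X_mul; set Z := w ^ w ^ 2; set Z' := (w - 1) ^ w ^ 2; set T := 2 ^ w.
  clearbody Z Z' T => ratio Y_mul X_mul; nia.
apply: leq_trans shrink; rewrite leq_mul2l ltnW ?orbT //; exact: ltn_expl.
Qed.

(* The red degree B k - (n - 1) exceeds B k - q B >= 2 B k / (w + 2), while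
   C / B = (w3 + 1) / (w3 + 1 - w2) <= 2 (w + 1) / (w + 2). *)
Lemma P4_count_condition (B Cm k n q w w2 w3 : nat) :
  n < q * B -> q * (w + 2) <= k * w -> w3.+1 * B = (w3.+1 - w2) * Cm ->
  w3 = w2 * w -> w2 = w * w -> 4 <= w -> n <= B * k -> 0 < n ->
  Cm * k < w.+1 * (B * k - n.-1).
Proof.
move=> lt_qB le_kw pascal w3E w2E w_ge4 n_le n_gt0.
have w3_ge : 4 * w2 <= w3 by rewrite w3E mulnC leq_mul2l w_ge4 orbT.
pose p := w3.+1 - w2.
have pE : p + w2 = w3.+1 by rewrite /p; lia.
move: pascal; rewrite -/p => pascal; clearbody p.
have w2_ge : 4 * w <= w2 by rewrite w2E leq_mul2r w_ge4 orbT.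
have p_ge : w2 + 2 * w <= p by lia.
have w2_le_wp : w2 <= w * p.
  have : 1 * p <= w * p by rewrite leq_mul2r (leq_trans _ w_ge4) ?orbT.
  lia.
pose X := w * p - w2.
have XE : X + w2 = w * p by rewrite /X subnK.
clearbody X.
have a2 : w * w.+1 * p <= (w + 2) * X.
  have b1 : w * (w2 + 2 * w) <= w * p by rewrite leq_mul2l p_ge orbT.
  have b2 : (w + 2) * X + (w + 2) * w2 = (w + 2) * (w * p) by rewrite -mulnDr XE.
  rewrite w2E in b1 b2; lia.
have a1 := leq_mul le_kw (leqnn (B * X)).
have a2' := leq_mul (leqnn (B * q)) a2.
have a3 := leq_mul lt_qB (leqnn (w * w.+1 * p)).
have a4 : n.+1 * w.+1 * p <= B * k * X.
  by rewrite -(@leq_pmul2r w) ?(leq_trans _ w_ge4) //; lia.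
have a5 : B * k * X + B * k * w2 = B * k * w * p by rewrite -mulnDr XE mulnA.
have scaled : p * (Cm * k) < p * (w.+1 * (B * k - n.-1)).
  have a7 : p * Cm * k = w3.+1 * B * k by rewrite pascal.
  have a8 : w3.+1 * B * k = p * (B * k) + w2 * (B * k) by rewrite -pE; lia.
  pose Z := B * k - n.-1.
  have ZE : Z + n.-1 = B * k by rewrite /Z subnK //; lia.
  rewrite -/Z; clearbody Z.
  have a9 : p * w.+1 * Z + p * w.+1 * n.-1 = p * w.+1 * (B * k) by rewrite -mulnDr ZE.
  have a11 : p * w.+1 * n.-1 + p * w.+1 * 2 = p * w.+1 * n.+1.
    by rewrite -mulnDr; congr (_ * _); lia.
  have p_gt0 : 0 < p by lia.
  have a12 : 0 < p * w.+1 by rewrite muln_gt0 p_gt0.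
  lia.
by rewrite ltn_mul2l in scaled; case/andP: scaled.
Qed.

Lemma design_size_condition (B Cm k n q w w2 w3 : nat) :
  q * B <= n + B -> k * w <= q * (w + 2) + w -> w3.+1 * B = (w3.+1 - w2) * Cm ->
  w3 = w2 * w -> w2 = w * w -> 4 <= w -> Cm * w <= n -> w3.+1 * w <= n ->
  (w3.+1 + Cm * k) * w <= n * w + 9 * n.
Proof.
move=> qB_le kw_le pascal w3E w2E w_ge4 Cm_le m_le.
have w3_ge : 4 * w2 <= w3 by rewrite w3E mulnC leq_mul2l w_ge4 orbT.
pose p := w3.+1 - w2.
have pE : p + w2 = w3.+1 by rewrite /p; lia.
move: pascal; rewrite -/p => pascal; clearbody p.
have c0 : w3.+1 * w <= (w + 2) * p by lia.
have b1 := leq_mul qB_le (leqnn w3.+1).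
have hF2q := congr1 (muln q) pascal.
have b1' : Cm * q * p <= n * w3.+1 + Cm * p by lia.
have b2 := leq_mul b1' (leqnn w).
have b2' := leq_mul (leqnn n) c0.
have b2'' : Cm * q * w * p <= (n * (w + 2) + Cm * w) * p by lia.
have p_gt0 : 0 < p by lia.
rewrite leq_pmul2r // in b2''.
have b3 := leq_mul kw_le (leqnn (Cm * w)).
have b3' := leq_mul b2'' (leqnn (w + 2)).
have b4 := leq_mul Cm_le (leqnn (w + 2)).
have b5 := leq_mul Cm_le (leqnn w).
have b6 := leq_mul m_le (leqnn w).
have b7 := leq_mul (leqnn n) w_ge4.
rewrite -(@leq_pmul2r w) ?(leq_trans _ w_ge4) //.
lia.
Qed.

Lemma twoK2_count_condition (B Cd k n q w : nat) :
  q * (w + 2) <= k * w -> n < q * B -> Cd * w <= B -> 4 <= w ->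
  Cd * k + n <= B * k.
Proof.
move=> le_kw lt_qB Cd_le w_ge4.
have ew : w = (w - 1).+1 by lia.
move: le_kw Cd_le; rewrite ew; set v := w - 1; have hv : 3 <= v by lia.
clearbody v => le_kw Cd_le.
have f1 := leq_mul le_kw (leqnn (B * v)).
have f2 := leq_mul lt_qB (leqnn ((v.+1 + 2) * v)).
have f3 : n.+1 * (v.+1 * v.+1) <= n.+1 * ((v.+1 + 2) * v) by rewrite leq_mul2l; nia.
have f4 := leq_mul Cd_le (leqnn (k * v.+1)).
suff : (Cd * k + n) * (v.+1 * v.+1) < B * k * (v.+1 * v.+1) + v.+1 * v.+1.
  rewrite -mulSnr ltn_mul2r; case/andP => _; lia.
lia.
Qed.

Lemma exists_copies n B w : 0 < B -> 0 < w -> exists q k,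
  [/\ n < q * B, q * B <= n + B, q * (w + 2) <= k * w & k * w <= q * (w + 2) + w].
Proof.
move=> B_gt0 w_gt0; exists (n %/ B).+1, ((n %/ B).+1 + (2 * (n %/ B).+1) %/ w + 1).
split; [exact: ltn_ceil | by rewrite mulSn addnC leq_add2r leq_divM | |].
- move: (n %/ B).+1 => q.
  by have := ltn_ceil (2 * q) w_gt0; move: (2 * q %/ w) => d; nia.
- move: (n %/ B).+1 => q.
  by have := leq_divM (2 * q) w; move: (2 * q %/ w) => d; nia.
Qed.

(* About (1 + 2/w) n / C(w^3, w^2) copies of each subset: enough for the red
   degree to survive n blue edges, few enough for n + O(n / w) vertices. *)
Lemma design_parameters w n : 4 <= w -> 2 ^ (w ^ 4) <= n ->
  exists k, [/\ (w ^ 3).+1 <= 2 * (w ^ 3 - w ^ 2).+1,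
    w * ((w ^ 3).+1 - (w ^ 3 - w ^ 2).+1) < (w ^ 3).+1,
    'C(w ^ 3 - w ^ 2, w ^ 2) * k + n <= 'C(w ^ 3, w ^ 2) * k,
    'C((w ^ 3).+1, w ^ 2) * k < w.+1 * ('C(w ^ 3, w ^ 2) * k - n.-1) &
    ((w ^ 3).+1 + 'C((w ^ 3).+1, w ^ 2) * k) * w <= n * w + 9 * n].
Proof.
move=> w_ge4 n_ge.
have w_gt0 : 0 < w by apply: leq_trans w_ge4.
have w2E : w ^ 2 = w * w by rewrite expnS expn1.
have w3E : w ^ 3 = w ^ 2 * w by rewrite expnSr.
have B_gt0 : 0 < 'C(w ^ 3, w ^ 2) by rewrite bin_gt0 leq_pexp2l.
have [q [k [lt_n le_n le_k ge_k]]] := exists_copies n B_gt0 w_gt0.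
have exp_le : 2 ^ (w ^ 3).+1 * 2 ^ w <= n.
  rewrite -expnD; apply: leq_trans n_ge; rewrite leq_exp2l // (expnSr w 3) w3E w2E.
  nia.
have Cm_le : 'C((w ^ 3).+1, w ^ 2) * w <= n.
  by apply: leq_trans exp_le; apply: leq_mul; [exact: bin_leq_exp2 | exact/ltnW/ltn_expl].
have m_le : (w ^ 3).+1 * w <= n.
  by apply: leq_trans exp_le; apply: leq_mul; exact/ltnW/ltn_expl.
have pascal := mul_bin_down (w ^ 3).+1 (w ^ 2).
have twoK2_cond := twoK2_count_condition le_k lt_n (mul_bin_sub_leq w_gt0) w_ge4.
have w2_ge : 4 * w <= w ^ 2 by rewrite w2E leq_mul2r w_ge4 orbT.
have w3_ge : 4 * w ^ 2 <= w ^ 3 by rewrite w3E mulnC leq_mul2l w_ge4 orbT.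
exists k; split=> //; first lia.
- have -> : (w ^ 3).+1 - (w ^ 3 - w ^ 2).+1 = w ^ 2 by lia.
  by rewrite mulnC -w3E.
- apply: (P4_count_condition lt_n le_k pascal w3E w2E w_ge4); first lia.
  by apply: leq_trans m_le; rewrite muln_gt0 w_gt0.
- exact: (design_size_condition le_n ge_k pascal w3E w2E w_ge4 Cm_le m_le).
Qed.

Lemma Ktt_count_condition t n g : 2 <= t -> t <= g -> 0 < n ->
  t.-1 * 'C(n + (n %/ g + t), t) <
    (t * (2 * g) ^ t) * 'C(n + (n %/ g + t) - n.-1, t).
Proof.
move=> t_ge2 t_le_g n_gt0.
have g_gt0 : 0 < g by lia.
have KE : n + (n %/ g + t) - n.-1 = (n %/ g + t).+1.
  move: (n %/ g) => d; lia.
rewrite KE.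
set N := n + (n %/ g + t); set K := (n %/ g + t).+1.
have N_le : N <= 2 * g * (n %/ g + 2).
  have := divn_eq n g; have := ltn_pmod n g_gt0.
  rewrite /N; set d := n %/ g; set rr := n %% g; clearbody d rr.
  have : d <= d * g by rewrite leq_pmulr.
  lia.
have K_ge : n %/ g + 2 <= K.+1 - t by rewrite /K; lia.
have bin_N_le : 'C(N, t) * t`! <= N ^ t by rewrite bin_ffact; exact: ffact_leq_expn.
have bin_K_ge : (n %/ g + 2) ^ t <= 'C(K, t) * t`!.
  rewrite bin_ffact; apply: leq_trans (expn_leq_ffact K t); exact: leq_expn_base.
have N_pow_le : N ^ t <= (2 * g) ^ t * (n %/ g + 2) ^ t.
  by rewrite -expnMn; exact: leq_expn_base.
have X_gt0 : 0 < (n %/ g + 2) ^ t by rewrite expn_gt0 addn_gt0 orbT.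
have Y_gt0 : 0 < (2 * g) ^ t by rewrite expn_gt0; apply/orP; left; lia.
suff lt_count : t.-1 * 'C(N, t) * t`! < t * (2 * g) ^ t * 'C(K, t) * t`!.
  by rewrite ltn_pmul2r ?fact_gt0 in lt_count.
have lower := leq_mul (leqnn (t * (2 * g) ^ t)) bin_K_ge.
have upper := leq_mul (leqnn t.-1) (leq_trans bin_N_le N_pow_le).
move: lower upper X_gt0 Y_gt0; set X := (n %/ g + 2) ^ t; set Y := (2 * g) ^ t.
set C1 := 'C(N, t); set C2 := 'C(K, t); set F := t`!.
move=> lower upper X_gt0 Y_gt0.
have XY_gt0 : 0 < Y * X by rewrite muln_gt0 X_gt0 Y_gt0.
have tE : t = t.-1.+1 by lia.
move: lower upper; rewrite tE; set s := t.-1; clearbody s X Y C1 C2 F => lower upper.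
lia.
Qed.

Lemma exists_maximal (P : pred nat) k N : P k -> (forall i, P i -> i <= N) ->
  exists2 w, k <= w & P w && ~~ P w.+1.
Proof.
move=> Pk bounded; case: (ex_maxnP (ex_intro _ k Pk) bounded) => w Pw max_w.
exists w; first exact: max_w.
by rewrite Pw; apply/negP => /max_w; rewrite ltnn.
Qed.

(** * Real estimates *)

Local Open Scope R_scope.

Lemma INR_leq (a b : nat) : (a <= b)%N -> INR a <= INR b.
Proof. by move=> /leP; apply: le_INR. Qed.

Lemma INR_ltn (a b : nat) : (a < b)%N -> INR a < INR b.
Proof. by move=> /ltP; apply: lt_INR. Qed.

Lemma INR_expn (a b : nat) : INR (expn a b) = INR a ^ b.
Proof.
elim: b => [|b IH]; first by rewrite expn0.
by rewrite expnS mult_INR IH.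
Qed.

Lemma ln_2_lt_1 : ln 2 < 1.
Proof.
rewrite -[X in _ < X]ln_exp; apply: ln_increasing; first lra.
have := exp_ineq1 1 ltac:(lra); lra.
Qed.

Lemma inv_le_ln_rpower (n w : nat) : (1 <= w)%N -> (2 <= n)%N ->
  (n < expn 2 (expn w.+1 4))%N ->
  / INR w <= 2 * Rpower (ln (INR n)) (- (1 / 4)).
Proof.
move=> w_ge1 n_ge2 n_lt.
have w_ge : 1 <= INR w by apply: (INR_leq w_ge1).
have n_ge : 2 <= INR n by apply: (INR_leq n_ge2).
have ln_pos : 0 < ln (INR n).
  rewrite -ln_1; apply: ln_increasing; lra.
pose z := Rpower (ln (INR n)) (1 / 4).
have z_pos : 0 < z by rewrite /z /Rpower; apply: exp_pos.
have z_pow : z ^ 4 = ln (INR n).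
  rewrite -Rpower_pow // /z Rpower_mult.
  have -> : 1 / 4 * INR 4 = 1 by simpl; field.
  by rewrite Rpower_1.
have ln_lt : ln (INR n) < (2 * INR w) ^ 4.
  have n_lt' := INR_ltn n_lt; rewrite INR_expn /= in n_lt'.
  have ln_n_lt : ln (INR n) < ln (2 ^ expn w.+1 4).
    apply: ln_increasing => //; lra.
  rewrite ln_pow in ln_n_lt; last lra.
  rewrite INR_expn in ln_n_lt.
  have base_le : INR w.+1 ^ 4 <= (2 * INR w) ^ 4.
    apply: pow_incr; rewrite S_INR; lra.
  have base_pos : 0 < INR w.+1 ^ 4 by apply: pow_lt; apply: lt_0_INR; apply/ltP.
  have := ln_2_lt_1; nra.
have z_le : z <= 2 * INR w.
  apply: Rnot_lt_le => lt_z.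
  have : (2 * INR w) ^ 4 <= z ^ 4 by apply: pow_incr; lra.
  lra.
rewrite Rpower_Ropp -/z.
have -> : / INR w = 2 * / (2 * INR w) by field; lra.
apply: Rmult_le_compat_l; first lra.
by apply: Rinv_le_contravar.
Qed.

Lemma pow_lt_compat_base (x z : R) (k : nat) : 0 <= x -> x < z -> (0 < k)%N -> x ^ k < z ^ k.
Proof.
move=> hx hxz; elim: k => [|k IH] // _.
case: k IH => [|k] IH; first by rewrite /= !Rmult_1_r.
have := IH isT; rewrite -!tech_pow_Rmult => h.
have : 0 <= x * x ^ k by apply: Rmult_le_pos => //; apply: pow_le.
nra.
Qed.

Lemma Rpower_root_bracket (g n k : nat) : (0 < k)%N -> (1 <= g)%N ->
  (expn g k <= n)%N -> (n < expn g.+1 k)%N ->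
  INR g <= Rpower (INR n) (/ INR k) < INR g + 1.
Proof.
move=> k_gt0 g_ge1 n_ge n_lt.
have g_ge : INR g ^ k <= INR n by rewrite -INR_expn; apply: INR_leq.
have n_lt' : INR n < (INR g + 1) ^ k by rewrite -S_INR -INR_expn; apply: INR_ltn.
have g_pos : 1 <= INR g by apply: (INR_leq g_ge1).
have n_pos : 0 < INR n by have := pow_R1_Rle _ k g_pos; lra.  
have k_pos : 0 < INR k by apply: (INR_ltn k_gt0).
pose y := Rpower (INR n) (/ INR k).
have y_pow : y ^ k = INR n.
  by rewrite -Rpower_pow ?Rpower_mult ?Rinv_l ?Rpower_1 //; [lra | exact: exp_pos].
rewrite -/y; split.
- apply: Rnot_lt_le => lt_y.
  have : y ^ k < INR g ^ k by apply: pow_lt_compat_base => //; [exact/Rlt_le/exp_pos].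
  lra.
- apply: Rnot_le_lt => le_y.
  have : (INR g + 1) ^ k <= y ^ k by apply: pow_incr; lra.
  lra.
Qed.

Lemma Ktt_size_bound (t n g : nat) : (1 <= t)%N -> (1 <= g)%N ->
  (expn g (2 * t) <= n)%N -> (n < expn g.+1 (2 * t))%N ->
  INR (t * expn (2 * g) t + (n + (n %/ g + t))) <=
    INR n + (INR t * 2 ^ t + 2 + INR t) * Rpower (INR n) (1 - 1 / (2 * INR t)).
Proof.
move=> t_ge1 g_ge1 n_ge n_lt.
have [g_le_y y_lt] := Rpower_root_bracket (ltac:(lia) : (0 < 2 * t)%N) g_ge1 n_ge n_lt.
have t_ge : 1 <= INR t by apply: (INR_leq t_ge1).
have g_ge : 1 <= INR g by apply: (INR_leq g_ge1).
pose y := Rpower (INR n) (/ (2 * INR t)).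
have two : INR 2 = 2 by [].
rewrite mult_INR two -/y in g_le_y y_lt.
pose E := Rpower (INR n) (1 - 1 / (2 * INR t)).
have n_pos : 0 < INR n.
  apply: (INR_ltn (a := 0)); apply: leq_trans n_ge; by rewrite expn_gt0 g_ge1.
have E_pos : 0 < E by exact: exp_pos.
have Ey : E * y = INR n.
  rewrite /E /y -Rpower_plus.
  have -> : 1 - 1 / (2 * INR t) + / (2 * INR t) = 1 by field; lra.
  by rewrite Rpower_1.
have y_pow : y ^ (2 * t) = INR n.
  rewrite -Rpower_pow ?Rpower_mult; last exact: exp_pos.
  have -> : / (2 * INR t) * INR (2 * t) = 1 by rewrite mult_INR /=; field; lra.
  by rewrite Rpower_1.
have gt_le_E : INR g ^ t <= E.
  apply: (Rmult_le_reg_r y); first lra.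
  rewrite Ey -y_pow.
  have : INR g ^ t <= y ^ t by apply: pow_incr; lra.
  have : y ^ t * y <= y ^ (2 * t).
    rewrite Rmult_comm tech_pow_Rmult; apply: Rle_pow; [lra | apply/leP; lia].
  have := pow_le _ t (Rle_trans _ _ _ Rle_0_1 g_ge); nra.
have E_ge1 : 1 <= E by have := pow_R1_Rle _ t g_ge; lra.
have ng_le : INR (n %/ g) <= 2 * E.
  have := INR_leq (leq_divM n g); rewrite mult_INR => le_n.
  apply: (Rmult_le_reg_r (INR g)); first lra.
  nra.
rewrite !plus_INR mult_INR INR_expn mult_INR Rpow_mult_distr.
have : INR t * (INR 2 ^ t * INR g ^ t) <= INR t * 2 ^ t * E.
  rewrite -Rmult_assoc; apply: Rmult_le_compat_l; last exact: gt_le_E.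
  apply: Rmult_le_pos; [lra | apply: pow_le; simpl; lra].
have : INR t <= INR t * E by nra.
simpl INR; rewrite -/E; lra.
Qed.

Lemma design_size_bound (M n w rho : R) : 1 <= w -> 0 <= n ->
  M * w <= n * w + 9 * n -> / w <= 2 * rho -> M <= n + 18 * n * rho.
Proof.
move=> w_ge1 n_ge0 M_le inv_w_le.
have w_pos : 0 < w by lra.
have inv_w_pos : 0 < / w by apply: Rinv_0_lt_compat.
have rho_ge0 : 0 <= rho by lra.
have M_le' : M <= n + 9 * n * / w.
  apply: (Rmult_le_reg_r w) => //.
  have -> : (n + 9 * n * / w) * w = n * w + 9 * n by field; lra.
  lra.
have scaled : 9 * n * / w <= 9 * n * (2 * rho) by apply: Rmult_le_compat_l; lra.
lra.
Qed.

Lemma IR_le_twoK2_P4_star n : (2 ^ (4 ^ 4) <= n)%N ->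
  IR_le twoK2 (@star n) (INR n + 18 * INR n * Rpower (ln (INR n)) (- (1 / 4))) /\
  IR_le P4 (@star n) (INR n + 18 * INR n * Rpower (ln (INR n)) (- (1 / 4))).
Proof.
move=> n_large.
have bounded i : (2 ^ (i ^ 4) <= n -> i <= n)%N.
  have i_le : (i <= i ^ 4)%N by case: i => // i; rewrite -{1}[i.+1]expn1; exact: leq_pexp2l.
  move/(leq_trans (leq_pexp2l (isT : (0 < 2)%N) i_le)); exact/leq_trans/ltnW/ltn_expl.
have [w w_ge4 /andP [n_ge n_lt]] := exists_maximal (P := fun w => (2 ^ (w ^ 4) <= n)%N)
  n_large bounded.
have [k [m_le lt_m count_twoK2 count_P4 size_le]] := design_parameters w_ge4 n_ge.
have card_le : INR #|{: 'I_(w ^ 3).+1 + design (w ^ 3).+1 (w ^ 2) k}| <=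
    INR n + 18 * INR n * Rpower (ln (INR n)) (- (1 / 4)).
  have w_ge1 : (1 <= w)%N by apply: leq_trans w_ge4.
  have n_ge2 : (2 <= n)%N by apply: leq_trans n_large.
  rewrite -ltnNge in n_lt; rewrite card_sum card_ord card_design.
  apply: (design_size_bound (INR_leq w_ge1) (pos_INR n) _ (inv_le_ln_rpower w_ge1 n_ge2 n_lt)).
  have nine : INR 9 = 9 by rewrite INR_IZR_INZ.
  by have := INR_leq size_le; rewrite !(mult_INR, plus_INR) nine.
split; apply: (IR_le_of_arrow (bigraph_simple _) _ card_le).
- exact: design_arrow_twoK2 (ltn0Sn _) m_le count_twoK2.
- exact: design_arrow_P4 lt_m count_twoK2 count_P4.
Qed.

Lemma IR_le_Ktt_star t n : (2 <= t)%N -> (t.+1 ^ (2 * t) <= n)%N ->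
  IR_le (@Ktt t) (@star n)
    (INR n + (INR t * 2 ^ t + 2 + INR t) * Rpower (INR n) (1 - 1 / (2 * INR t))).
Proof.
move=> t_ge2 n_large.
have bounded i : (i ^ (2 * t) <= n -> i <= n)%N.
  move/(leq_trans _); apply; case: i => // i.
  by rewrite -{1}[i.+1]expn1; apply: leq_pexp2l; lia.
have [g t_lt_g /andP [n_ge n_lt]] := exists_maximal (P := fun g => (g ^ (2 * t) <= n)%N)
  n_large bounded.
rewrite -ltnNge in n_lt.
have n_gt0 : (0 < n)%N by apply: leq_trans n_ge; rewrite expn_gt0; lia.
apply: (IR_le_of_arrow (bigraph_simple _)).
  by apply: complete_arrow_Ktt (Ktt_count_condition t_ge2 (ltnW t_lt_g) n_gt0); lia.
rewrite card_sum !card_ord; apply: Ktt_size_bound n_ge n_lt; lia.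
Qed.

Theorem theorem3 (t : nat) (ht : (2 <= t)%N) :
  exists c : R, (0 < c)%R /\
  exists n0 : nat, forall n : nat, (n0 < n)%N ->
    IR_le twoK2 (@star n)
      (INR n + c * INR n * Rpower (ln (INR n)) (- (1 / 4)))%R /\
    IR_le P4 (@star n)
      (INR n + c * INR n * Rpower (ln (INR n)) (- (1 / 4)))%R /\
    IR_le (@Ktt t) (@star n)
      (INR n + c * Rpower (INR n) (1 - 1 / (2 * INR t)))%R.
Proof.
pose cK := INR t * 2 ^ t + 2 + INR t.
have cK_ge0 : 0 <= cK by rewrite /cK; have := pos_INR t; have := pow_le 2 t; nra.
exists (18 + cK); split; first lra.
exists (2 ^ (4 ^ 4) + t.+1 ^ (2 * t))%N => n lt_n.
have [twoK2_le P4_le] := IR_le_twoK2_P4_star (leq_trans (leq_addr _ _) (ltnW lt_n)).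
have Ktt_le := IR_le_Ktt_star ht (leq_trans (leq_addl _ _) (ltnW lt_n)).
have rho_ge0 : 0 <= INR n * Rpower (ln (INR n)) (- (1 / 4)).
  by apply: Rmult_le_pos; [exact: pos_INR | exact/Rlt_le/exp_pos].
have eps_ge0 : 0 <= Rpower (INR n) (1 - 1 / (2 * INR t)) by exact/Rlt_le/exp_pos.
split; [|split].
- by apply: IR_le_trans twoK2_le _; nra.
- by apply: IR_le_trans P4_le _; nra.
- by apply: IR_le_trans Ktt_le _; rewrite /cK; nra.
Qed.
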